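(* Let $T$ be a tree of order $n$. Then $$\frac{n+2\gamma(T)}{3}\le \operatorname{avd}(T)\le\frac{n+2\Gamma(T)}{3}.$$
   Context: A dominating set of a graph $G=(V,E)$ is a set $S\subseteq V$ such that every vertex is in $S$ or adjacent to a vertex of $S$; it is minimal if no proper subset is dominating. $\gamma(T)$ is the minimum size of a dominating set and $\Gamma(T)$ the maximum size of a minimal dominating set. $\operatorname{avd}(T)=\frac{1}{|\mathcal{D}(T)|}\sum_{S\in\mathcal{D}(T)}|S|$ is the average size of a dominating set, where $\mathcal{D}(T)$ is the collection of all dominating sets of $T$. *)

From mathcomp Require Import all_boot all_order all_algebra.
Set Implicit Arguments. Unset Strict Implicit. Unset Printing Implicit Defensive.
Import GRing.Theory Num.Theory.

Section Dom.
Variables (T : finType) (e : rel T).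

Definition simple_graph : Prop := symmetric e /\ irreflexive e.

Definition n_edges : nat := #|[set p : T * T | e p.1 p.2]| %/ 2.

Definition is_tree : Prop :=
  [/\ simple_graph, 0 < #|T|, (forall u v : T, connect e u v)
    & n_edges = #|T| - 1].

Definition dominating (S : {set T}) : bool :=
  [forall v, (v \in S) || [exists u in S, e u v]].

Definition minimal_dominating (S : {set T}) : bool :=
  dominating S && [forall S' : {set T}, (S' \proper S) ==> ~~ dominating S'].

(* gamma: minimum size of a dominating set (setT is always dominating) *)
Definition gamma : nat :=
  #|[arg min_(S < [set: T] | dominating S) #|S|]|.

Definition Gamma_ : nat := \max_(S : {set T} | minimal_dominating S) #|S|.

Definition n_dom : nat := #|[set S : {set T} | dominating S]|.

Definition avd : rat :=
  (\sum_(S : {set T} | dominating S) #|S|)%:R / (n_dom)%:R.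

End Dom.

(* For a dominating set D let crit D be the set of vertices v of D such that D \ v is no
   longer dominating.  For a fixed vertex v, adding v maps the dominating sets avoiding v
   bijectively onto the dominating sets containing v in which v is not critical; summing
   over v gives 3 * sum_D |D| = n * N + sum_D (|D| + |crit D|), the sums ranging over the
   N dominating sets.  So it suffices to show 2 gamma <= |D| + |crit D| <= 2 Gamma for
   every dominating set D of a tree.  A tree is 1-degenerate (every nonempty vertex set
   has a vertex with at most one neighbour inside it), so suitable 2-colourings can be
   built by peeling off such vertices one at a time.
   Lower bound: with Q = D \ crit D, every vertex not dominated by crit D has at least two
   dominators in Q; a 2-colouring of Q using both colours on each of these sets of
   dominators splits Q into Q1 and Q2 such that crit D with Q1 added, and crit D with Q2
   added, are both dominating.
   Upper bound: let I be the vertices of D with no neighbour in D and Y the vertices not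
   dominated by I.  Then Y contains D \ I and, through private neighbours outside D, an
   injective image of crit D \ I; a proper 2-colouring of the tree cuts Y into two sets
   whose unions with I are independent, hence extend to minimal dominating sets. *)

From mathcomp Require Import all_boot all_order all_algebra zify.
Set Implicit Arguments. Unset Strict Implicit. Unset Printing Implicit Defensive.

Lemma sum_card_exchange (I J : finType) (P : pred I) (F : I -> {set J}) :
  \sum_(i | P i) #|F i| = \sum_j #|[set i | P i & j \in F i]|.
Proof.
under eq_bigr do rewrite -sum1_card.
rewrite (exchange_big_dep xpredT) //=.
by apply: eq_bigr => j _; rewrite sum1dep_card.
Qed.

Section Domination.
Variables (T : finType) (e : rel T).

(* The closed neighbourhood N[v], oriented as the set of vertices that dominate v. *)
Definition cnbh (v : T) : {set T} := [set u | (u == v) || e u v].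

Definition critical (D : {set T}) : {set T} :=
  [set v in D | ~~ dominating e (D :\ v)].

Lemma cnbh_refl v : v \in cnbh v.
Proof. by rewrite inE eqxx. Qed.

Lemma dominatingP S : reflect (forall v, S :&: cnbh v != set0) (dominating e S).
Proof.
apply: (iffP forallP) => dS v.
- apply/set0Pn; have /orP[vS | /existsP[u /andP[uS euv]]] := dS v.
  + by exists v; rewrite inE vS cnbh_refl.
  + by exists u; rewrite !inE uS euv orbT.
- have /set0Pn[u] := dS v; rewrite !inE => /andP[uS /orP[/eqP<- | euv]].
  + by rewrite uS.
  + by apply/orP; right; apply/existsP; exists u; rewrite uS.
Qed.

Lemma dominatingPn S :
  reflect (exists v, S :&: cnbh v = set0) (~~ dominating e S).
Proof.
apply: (iffP idP) => [ndS | [v Sv0]]; last first.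
  by apply/negP => /dominatingP/(_ v); rewrite Sv0 eqxx.
have /existsP[v /eqP Sv0] : [exists v, S :&: cnbh v == set0].
  by apply: contraR ndS => /existsPn Sv; apply/dominatingP.
by exists v.
Qed.

Lemma dominatingT : dominating e setT.
Proof. by apply/forallP => v; rewrite in_setT. Qed.

Lemma dominatingS (S S' : {set T}) :
  S \subset S' -> dominating e S -> dominating e S'.
Proof.
move=> sSS' /dominatingP dS; apply/dominatingP => v.
have /set0Pn[u] := dS v; rewrite inE => /andP[uS uv].
by apply/set0Pn; exists u; rewrite inE (subsetP sSS' u uS).
Qed.

Lemma gamma_min S : dominating e S -> gamma e <= #|S|.
Proof.
by rewrite /gamma; case: arg_minnP => [|M _ minM]; [exact: dominatingT | exact: minM].
Qed.

Lemma n_dom_gt0 : 0 < n_dom e.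
Proof. by rewrite card_gt0; apply/set0Pn; exists setT; rewrite inE dominatingT. Qed.

Lemma criticalP D v : dominating e D ->
  reflect (exists w, cnbh w :&: D = [set v]) (v \in critical D).
Proof.
move=> dD; rewrite inE; apply: (iffP andP) => [[vD /dominatingPn[w Dw0]] | [w Nw]].
- have only_v x : x \in cnbh w -> x \in D -> x = v.
    move=> xN xD; apply/eqP; apply: contraT => xv.
    by have := in_set0 x; rewrite -Dw0 in_setI in_setD1 xv xD xN.
  have /set0Pn[u] := dominatingP _ dD w; rewrite inE => /andP[uD uN].
  exists w; apply/setP => x; rewrite in_setI in_set1.
  apply/andP/eqP => [[] | ->]; first exact: only_v.
  by rewrite -(only_v u uN uD).
- have vD : v \in D by have := set11 v; rewrite -Nw inE => /andP[].
  split=> //; apply/dominatingPn; exists w; apply/setP => x.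
  rewrite in_set0; apply/negbTE/negP; rewrite in_setI in_setD1.
  case/andP=> /andP[/eqP xv xD] xN; apply: xv.
  by apply/set1P; rewrite -Nw in_setI xN xD.
Qed.

Lemma card_dominating_mem v :
  #|[set D | dominating e D & v \in D]| =
  #|[set D | dominating e D & v \notin D]| +
  #|[set D | dominating e D & v \in critical D]|.
Proof.
rewrite -(cardsID [set D | dominating e (D :\ v)]); congr (_ + _); last first.
  apply: eq_card => D; rewrite !inE.
  by case: (dominating e D); case: (v \in D); case: (dominating e (D :\ v)).
have addv_inj :
    {in [set D | dominating e D & v \notin D] &, injective (setU [set v])}.
  move=> D1 D2; rewrite !inE => /andP[_ vD1] /andP[_ vD2] E.
  by rewrite -(setU1K vD1) -(setU1K vD2) E.
rewrite setIC -(card_in_imset addv_inj); apply: eq_card => D; rewrite !inE.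
apply/idP/imsetP => [/and3P[dDv dD vD] | [D0]].
- exists (D :\ v); last by rewrite setD1K.
  by rewrite inE dDv setD11.
- rewrite inE => /andP[dD0 vD0] ->; rewrite setU1K //.
  by apply/and3P; split; [| exact: dominatingS (subsetUr _ _) dD0 | exact: setU11].
Qed.

Lemma sum_card_dominating :
  \sum_(D | dominating e D) #|D| =
  \sum_(D | dominating e D) #|~: D| + \sum_(D | dominating e D) #|critical D|.
Proof.
rewrite [LHS]sum_card_exchange.
rewrite [X in X + _]sum_card_exchange [X in _ + X]sum_card_exchange.
rewrite -big_split; apply: eq_bigr => v _ /=.
by rewrite card_dominating_mem; congr (_ + _); apply: eq_card => D; rewrite !inE.
Qed.

Lemma three_sum_card_dominating :
  3 * \sum_(D | dominating e D) #|D| =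
  #|T| * n_dom e + \sum_(D | dominating e D) (#|D| + #|critical D|).
Proof.
have compl : \sum_(D | dominating e D) (#|D| + #|~: D|) = #|T| * n_dom e.
  rewrite (eq_bigr (fun=> #|T|)) => [|D _]; last exact: cardsC.
  by rewrite sum_nat_cond_const mulnC.
have := sum_card_dominating.
rewrite big_split /= -compl big_split /=.
lia.
Qed.

Lemma critical_sub D : critical D \subset D.
Proof. by apply/subsetP => v; rewrite inE => /andP[]. Qed.

Lemma critical_free_cnbh_card D y : dominating e D -> critical D :&: cnbh y = set0 ->
  1 < #|(D :\: critical D) :&: cnbh y|.
Proof.
move=> dD Py0.
have noncrit x : x \in cnbh y -> x \notin critical D.
  by move=> xN; apply/negP => xP; have := in_set0 x; rewrite -Py0 in_setI xP xN.
have /set0Pn[x /setIP[xD xN]] := dominatingP _ dD y.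
have dDx : dominating e (D :\ x) by move: (noncrit x xN); rewrite inE xD negbK.
have /set0Pn[z /setIP[/setD1P[zx zD] zN]] := dominatingP _ dDx y.
apply/card_gt1P; exists x, z.
by rewrite !in_setI !in_setD xD zD xN zN !noncrit // eq_sym.
Qed.

Lemma dominating_critical_cover D K : dominating e D ->
  (forall y, 1 < #|(D :\: critical D) :&: cnbh y| ->
     (D :\: critical D) :&: cnbh y :&: K != set0) ->
  dominating e (critical D :|: (D :\: critical D) :&: K).
Proof.
move=> dD hitK; apply/dominatingP => y; apply/set0Pn.
case: (eqVneq (critical D :&: cnbh y) set0) => [Py0 | /set0Pn[x /setIP[xP xN]]].
- have /set0Pn[x] := hitK y (critical_free_cnbh_card dD Py0).
  rewrite !in_setI => /andP[/andP[xQ xN] xK].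
  by exists x; rewrite in_setI in_setU in_setI xQ xK xN orbT.
- by exists x; rewrite in_setI in_setU xP xN.
Qed.

Definition isolated (D : {set T}) : {set T} := [set v | cnbh v :&: D == [set v]].

Definition undominated (S : {set T}) : {set T} := [set y | S :&: cnbh y == set0].

Lemma isolated_sub D : isolated D \subset D.
Proof.
by apply/subsetP => v; rewrite inE => /eqP Nv; have := set11 v; rewrite -Nv => /setIP[].
Qed.

Lemma isolated_sub_critical D : dominating e D -> isolated D \subset critical D.
Proof.
by move=> dD; apply/subsetP => v; rewrite inE => /eqP Nv; apply/criticalP => //; exists v.
Qed.

End Domination.

Section SimpleGraph.
Variables (T : finType) (e : rel T).
Hypotheses (sym : symmetric e) (irr : irreflexive e).

Definition independent (S : {set T}) : bool :=
  [forall u in S, forall v in S, ~~ e u v].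

Lemma independentP (S : {set T}) :
  reflect {in S &, forall u v, ~~ e u v} (independent S).
Proof.
apply: (iffP forall_inP) => [iS u v uS | iS u uS]; first exact: forall_inP (iS u uS) v.
by apply/forall_inP => v; apply: iS.
Qed.

Lemma maxset_independent_minimal (M : {set T}) :
  maxset independent M -> minimal_dominating e M.
Proof.
move=> maxM; have /independentP iM := maxsetp maxM.
apply/andP; split.
- apply/dominatingP => v; apply/negP => /eqP Mv0.
  have notin_M x : x \in M -> e v x -> False.
    by move=> xM evx; have := in_set0 x; rewrite -Mv0 in_setI xM inE sym evx orbT.
  have ivM : independent (v |: M).
    apply/independentP => a b; rewrite !in_setU1.
    case/predU1P=> [-> | aM] /predU1P[-> | bM]; rewrite ?irr //.
    + by apply/negP; apply: notin_M.
    + by apply/negP; rewrite sym; apply: notin_M.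
    + exact: iM.
  have vM : v \in M by rewrite -(maxsetsup maxM ivM (subsetUr _ _)) setU11.
  by have := in_set0 v; rewrite -Mv0 in_setI vM cnbh_refl.
- apply/forallP => S'; apply/implyP => /properP[sS'M [m mM mS']].
  apply/negP => /dominatingP/(_ m)/set0Pn[u]; rewrite in_setI inE.
  case/andP=> uS' /predU1P[um | eum]; first by rewrite -um uS' in mS'.
  by move/negP: (iM u m (subsetP sS'M u uS') mM).
Qed.

Lemma independent_le_Gamma (S : {set T}) : independent S -> #|S| <= Gamma_ e.
Proof.
move=> iS; have [M maxM sSM] := maxset_exists iS.
apply: leq_trans (subset_leq_card sSM) _.
exact: leq_bigmax_cond (maxset_independent_minimal maxM).
Qed.

Lemma setD_isolated_undominated D :
  D :\: isolated e D \subset undominated e (isolated e D).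
Proof.
apply/subsetP => x /setDP[xD xI]; rewrite inE; apply/eqP/setP => p.
rewrite in_set0; apply/negbTE/negP => /setIP[pI pN].
have xp : x = p.
  move: (pI); rewrite inE => /eqP Np; apply/set1P; rewrite -Np in_setI xD andbT.
  by move: pN; rewrite !inE eq_sym sym.
by rewrite xp pI in xI.
Qed.

Lemma card_critical_private D : dominating e D ->
  #|D :\: isolated e D| + #|critical e D :\: isolated e D| <=
  #|undominated e (isolated e D)|.
Proof.
move=> dD; pose f v := odflt v [pick w | cnbh e w :&: D == [set v]].
have fP v : v \in critical e D -> cnbh e (f v) :&: D = [set v].
  case/(criticalP _ dD) => w Nw; rewrite /f; case: pickP => [w' /eqP // | /(_ w)].
  by rewrite Nw eqxx.
have f_inj : {in critical e D :\: isolated e D &, injective f}.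
  move=> v v' /setDP[vP _] /setDP[v'P _] fvv'.
  by apply: set1_inj; rewrite -(fP v vP) -(fP v' v'P) fvv'.
have fY v : v \in critical e D :\: isolated e D ->
    f v \in undominated e (isolated e D) :\: D.
  case/setDP=> vP vI; have Nfv := fP v vP.
  have fvD : f v \notin D.
    apply: contra vI => fvD.
    have /set1P fvv : f v \in [set v] by rewrite -Nfv in_setI cnbh_refl.
    by move: Nfv; rewrite fvv inE => ->.
  rewrite in_setD fvD inE; apply/eqP/setP => p.
  rewrite in_set0; apply/negbTE/negP => /setIP[pI pN].
  have /set1P pv : p \in [set v] by rewrite -Nfv in_setI pN (subsetP (isolated_sub e D) p pI).
  by rewrite -pv pI in vI.
have le1 : #|D :\: isolated e D| <= #|undominated e (isolated e D) :&: D|.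
  by apply: subset_leq_card; rewrite subsetI setD_isolated_undominated subsetDl.
have le2 : #|critical e D :\: isolated e D| <= #|undominated e (isolated e D) :\: D|.
  rewrite -(card_in_imset f_inj); apply: subset_leq_card.
  by apply/subsetP => w /imsetP[v vP ->]; apply: fY.
by rewrite -(cardsID D (undominated e (isolated e D))) leq_add.
Qed.

Lemma independent_isolated_undominated D K : independent K ->
  independent (isolated e D :|: undominated e (isolated e D) :&: K).
Proof.
move=> /independentP iK; apply/independentP.
have iso_nbr p q : p \in isolated e D -> q \in isolated e D -> ~~ e p q.
  move=> pI; rewrite inE => /eqP Nq; apply/negP => epq.
  have /set1P pq : p \in [set q].
    by rewrite -Nq in_setI inE epq orbT (subsetP (isolated_sub e D) p pI).
  by rewrite pq irr in epq.
have undom_nbr p y : p \in isolated e D -> y \in undominated e (isolated e D) -> ~~ e p y.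
  move=> pI; rewrite inE => /eqP Iy0; apply/negP => epy.
  by have := in_set0 p; rewrite -Iy0 in_setI pI inE epy orbT.
move=> a b; rewrite !in_setU !in_setI => /orP[aI | /andP[aY aK]] /orP[bI | /andP[bY bK]].
- exact: iso_nbr.
- exact: undom_nbr.
- by rewrite sym; apply: undom_nbr.
- exact: iK.
Qed.

End SimpleGraph.

Section ConnectedGraph.
Variables (T : finType) (e : rel T).

Definition arcs : {set T * T} := [set p | e p.1 p.2].

Lemma connect_exit (W : {set T}) x y : connect e x y -> x \in W -> y \notin W ->
  exists2 p : T * T, p.1 \in W & (p.2 \notin W) && e p.1 p.2.
Proof.
case/connectP=> s; elim: s x => [|z s IH] x /= xs ey xW yW; first by rewrite ey xW in yW.
case/andP: xs => exz zs; case: (boolP (z \in W)) => zW; first exact: IH zs ey zW yW.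
by exists (x, z); rewrite //= zW exz.
Qed.

Hypotheses (sym : symmetric e) (conn : forall x y : T, connect e x y).

Lemma card_arcs_outside (W : {set T}) :
  W != set0 -> 2 * #|~: W| <= #|arcs :\: setX W W|.
Proof.
move Ek : #|~: W| => k; elim: k W Ek => [|k IH] W Ek W0 //.
have [w0 w0W] := set0Pn _ W0.
have /set0Pn[y0] : ~: W != set0 by rewrite -card_gt0 Ek.
rewrite inE => y0W.
have [[x y] /= xW /andP[yW exy]] := connect_exit (conn w0 y0) w0W y0W.
have Ek' : #|~: (y |: W)| = k.
  by move: Ek; rewrite (cardsD1 y) inE yW setCU setIC -setDE => -[].
have yW0 : y |: W != set0 by apply/set0Pn; exists y; apply: setU11.
have le_k := IH _ Ek' yW0.
pose xy := [set (x, y); (y, x)].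
have card_xy : #|xy| = 2.
  by rewrite cards2 xpair_eqE; case: eqP => // xy_eq; rewrite -xy_eq xW in yW.
have xy_outer : xy \subset arcs :\: setX W W.
  apply/subsetP => p; rewrite !inE => /orP[] /eqP-> /=;
  by rewrite (negbTE yW) ?andbF //= sym.
have outer_sub : arcs :\: setX (y |: W) (y |: W) \subset (arcs :\: setX W W) :\: xy.
  rewrite setDDl; apply: setDS; apply/subsetP => -[a b]; rewrite !inE !xpair_eqE /=.
  by case/orP=> [/andP[-> ->] | /orP[] /andP[/eqP-> /eqP->]]; rewrite ?xW ?eqxx ?orbT.
have := subset_leq_card outer_sub; rewrite -(cardsID xy (arcs :\: setX W W)).
rewrite (setIidPr xy_outer) card_xy mulnSr addnC leq_add2l.
exact: leq_trans le_k.
Qed.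

End ConnectedGraph.

Definition one_degenerate (T : finType) (e : rel T) : Prop :=
  forall U : {set T}, U != set0 -> exists2 u, u \in U & #|[set x in U | e u x]| <= 1.

Lemma tree_one_degenerate (T : finType) (e : rel T) : is_tree e -> one_degenerate e.
Proof.
case=> [[sym _] T_gt0 conn n_edges_eq] U U0.
case: (boolP [exists u in U, #|[set x in U | e u x]| <= 1]).
  by case/exists_inP=> u; exists u.
move/exists_inPn=> big.
have inner : \sum_(u in U) #|[set x in U | e u x]| = #|arcs e :&: setX U U|.
  rewrite (eq_bigr (fun u => \sum_(x | (x \in U) && e u x) 1)) => [|u _]; last first.
    by rewrite sum1dep_card.
  rewrite pair_big_dep sum1dep_card /=; apply: eq_card => p.
  by rewrite !inE andbA andbC.
have inner_ge : 2 * #|U| <= #|arcs e :&: setX U U|.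
  by rewrite mulnC -sum_nat_const -inner; apply: leq_sum => u uU; rewrite ltnNge big.
have arcs_ge : 2 * #|T| <= #|arcs e|.
  rewrite -(cardsC U) -(cardsID (setX U U) (arcs e)) mulnDr.
  exact: leq_add inner_ge (card_arcs_outside sym conn U0).
have arcs_eq : #|arcs e| %/ 2 = #|T| - 1 := n_edges_eq.
exfalso; lia.
Qed.

Section OneDegenerate.
Variables (T : finType) (e : rel T).
Hypotheses (sym : symmetric e) (irr : irreflexive e) (deg : one_degenerate e).

Lemma one_degenerate_ind (P : {set T} -> Prop) :
  P set0 ->
  (forall (V : {set T}) u, u \in V -> #|[set x in V | e u x]| <= 1 -> P (V :\ u) -> P V) ->
  forall V, P V.
Proof.
move=> P0 Pstep V; move Ek : #|V| => k; elim: k V Ek => [|k IH] V Ek.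
  by move/eqP: Ek; rewrite cards_eq0 => /eqP->.
have /deg[u uV leaf] : V != set0 by rewrite -card_gt0 Ek.
by apply: (Pstep _ _ uV leaf); apply: IH; move: Ek; rewrite (cardsD1 u) uV => -[].
Qed.

Lemma one_degenerate_bipartite :
  exists C : {set T}, forall u v, e u v -> (u \in C) != (v \in C).
Proof.
suff /(_ setT)[C bipC] : forall V : {set T},
    exists C : {set T}, {in V &, forall u v, e u v -> (u \in C) != (v \in C)}.
  by exists C => u v; apply: bipC; rewrite in_setT.
apply: one_degenerate_ind => [|V u uV leaf [C' bipC']].
  by exists set0 => u; rewrite inE.
pose b := if [pick w in V | e u w] is Some w then w \notin C' else true.
have b_nbr w : w \in V -> e u w -> b = (w \notin C').
  move=> wV uw; rewrite /b; case: pickP => [w' /andP[w'V uw'] | /(_ w)].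
    by have -> : w' = w by apply: (card_le1_eqP leaf); rewrite inE ?w'V ?uw' ?wV ?uw.
  by rewrite wV uw.
exists [set x | if x == u then b else x \in C'] => x y xV yV exy; rewrite !inE.
case: (eqVneq x u) => [xu | xu]; case: (eqVneq y u) => [yu | yu].
- by rewrite xu yu irr in exy.
- by subst x; rewrite (b_nbr y yV exy); case: (y \in C').
- by subst y; rewrite sym in exy; rewrite (b_nbr x xV exy); case: (x \in C').
- by apply: bipC'; rewrite // !inE ?xu ?yu.
Qed.

Definition splits (C A : {set T}) : bool := (A :&: C != set0) && (A :\: C != set0).

Lemma splits2 (C : {set T}) a b : a \in C -> b \notin C -> splits C [set a; b].
Proof.
move=> aC bC; apply/andP; split; apply/set0Pn; [exists a | exists b].
  by rewrite !inE eqxx aC.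
by rewrite !inE eqxx orbT bC.
Qed.

Lemma splits_subset (C C' A A' : {set T}) :
  A' \subset A -> {in A', forall x, (x \in C) = (x \in C')} -> splits C' A' -> splits C A.
Proof.
move=> sA'A eqC /andP[/set0Pn[a /setIP[aA' aC']] /set0Pn[b /setDP[bA' bC']]].
apply/andP; split; apply/set0Pn; [exists a | exists b].
  by rewrite in_setI (subsetP sA'A a aA') (eqC a aA').
by rewrite in_setD (subsetP sA'A b bA') (eqC b bA') bC'.
Qed.

(* Deleting a leaf u can only break the neighbourhoods that have exactly two elements
   u and z in Q; they all share the same z, so one colour for u repairs all of them. *)
Lemma leaf_tight_cnbh_uniq (V Q : {set T}) u y y' z z' :
  #|[set x in V | e u x]| <= 1 -> Q \subset V -> y \in V -> y' \in V ->
  z != u -> z' != u ->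
  Q :&: cnbh e y = [set u; z] -> Q :&: cnbh e y' = [set u; z'] -> z = z'.
Proof.
move=> leaf QV yV y'V zu z'u Ey Ey'.
have other w a c :
    Q :&: cnbh e w = [set u; a] -> c \in Q :&: cnbh e w -> c != u -> c = a.
  by move=> -> /set2P[-> | //]; rewrite eqxx.
have nbr w a :
    w \in V -> w != u -> Q :&: cnbh e w = [set u; a] -> w \in [set x in V | e u x].
  move=> wV wu Ew; have := set21 u a; rewrite -Ew in_setI => /andP[_].
  by rewrite !inE eq_sym (negbTE wu) wV.
wlog y'u : y y' z z' yV y'V zu z'u Ey Ey' / y' != u.
  move=> gen; case: (eqVneq y' u) => [y'u | y'u]; last exact: (gen y y' z z').
  case: (eqVneq y u) => [yu | yu]; last by symmetry; apply: (gen y' y).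
  by subst y y'; apply: (other u z' z Ey') => //; rewrite Ey set22.
case: (eqVneq y u) => [yu | yu].
- subst y; have /setIP[zQ zN] : z \in Q :&: cnbh e u by rewrite Ey set22.
  have zy' : z = y'.
    apply: (card_le1_eqP leaf); first exact: nbr _ _ y'V y'u Ey'.
    by move: zN; rewrite !inE (negbTE zu) (subsetP QV z zQ) sym.
  by apply: (other y' z' z Ey') => //; rewrite in_setI zQ zy' cnbh_refl.
- have yy' : y = y'.
    by apply: (card_le1_eqP leaf); [exact: nbr _ _ y'V y'u Ey' | exact: nbr _ _ yV yu Ey].
  by subst y'; apply: (other y z' z Ey') => //; rewrite Ey set22.
Qed.

Lemma splits_cnbh_extend (V Q C' : {set T}) u :
  u \in V -> #|[set x in V | e u x]| <= 1 -> Q \subset V ->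
  (forall y, y \in V :\ u -> 1 < #|(Q :\ u) :&: cnbh e y| ->
     splits C' ((Q :\ u) :&: cnbh e y)) ->
  exists C, forall y, y \in V -> 1 < #|Q :&: cnbh e y| -> splits C (Q :&: cnbh e y).
Proof.
move=> uV leaf QV splitC'.
pose tight z := (z != u) && [exists y in V, Q :&: cnbh e y == [set u; z]].
pose b := [exists z, tight z && (z \notin C')].
have b_tight z : tight z -> b = (z \notin C').
  move=> tz; have /andP[zu /exists_inP[y yV /eqP Ey]] := tz.
  apply/existsP/idP => [[z' /andP[/andP[z'u /exists_inP[y' y'V /eqP Ey']] z'C]] | zC].
    by rewrite (leaf_tight_cnbh_uniq leaf QV yV y'V zu z'u Ey Ey').
  by exists z; rewrite tz zC.
pose C := [set x | if x == u then b else x \in C'].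
have C_u : (u \in C) = b by rewrite inE eqxx.
have C_off_u x : x != u -> (x \in C) = (x \in C').
  by move=> xu; rewrite inE (negbTE xu).
exists C => y yV big; set A := Q :&: cnbh e y in big *.
have Au : (Q :\ u) :&: cnbh e y = A :\ u by rewrite setIDAC.
case: (ltnP 1 #|A :\ u|) => [bigAu | smallAu].
  have yVu : y \in V :\ u.
    rewrite in_setD1 yV andbT; apply: contraTneq bigAu => yu; rewrite -leqNgt.
    apply: leq_trans leaf; apply: subset_leq_card; apply/subsetP => x.
    rewrite !inE yu => /andP[xu /andP[xQ /orP[/eqP xu' | exu]]].
      by rewrite xu' eqxx in xu.
    by rewrite (subsetP QV x xQ) sym.
  apply: splits_subset (subsetDl A [set u]) _ _.
    by move=> x; rewrite in_setD1 => /andP[xu _]; apply: C_off_u.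
  by rewrite -Au; apply: splitC' => //; rewrite Au.
have [uA cardAu] : u \in A /\ #|A :\ u| = 1.
  by have := cardsD1 u A; case: (u \in A) => /= cardA; [split => //; lia | lia].
have /cards1P[z Auz] : #|A :\ u| == 1 by rewrite cardAu.
have zu : z != u by have := set11 z; rewrite -Auz in_setD1 => /andP[].
have EA : A = [set u; z] by rewrite -(setD1K uA) Auz.
have tz : tight z by rewrite /tight zu; apply/exists_inP; exists y => //; rewrite -/A EA.
rewrite EA; case: (boolP (z \in C')) => zC'.
- by rewrite setUC; apply: splits2; rewrite ?C_u ?(b_tight z tz) ?C_off_u ?zC'.
- by apply: splits2; rewrite ?C_u ?(b_tight z tz) ?C_off_u.
Qed.

Lemma one_degenerate_cnbh_splitting (Q : {set T}) :
  exists C, forall y, 1 < #|Q :&: cnbh e y| -> splits C (Q :&: cnbh e y).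
Proof.
suff /(_ setT Q (subsetT Q))[C splitC] : forall V Q : {set T}, Q \subset V ->
    exists C, forall y, y \in V -> 1 < #|Q :&: cnbh e y| -> splits C (Q :&: cnbh e y).
  by exists C => y; apply: splitC; rewrite in_setT.
apply: one_degenerate_ind => [Q0 | V u uV leaf IH Q0 QV].
  by rewrite subset0 => /eqP->; exists set0 => y; rewrite inE.
have [C' splitC'] := IH (Q0 :\ u) (setSD _ QV).
exact: splits_cnbh_extend uV leaf QV splitC'.
Qed.

Lemma double_gamma_le D : dominating e D -> 2 * gamma e <= #|D| + #|critical e D|.
Proof.
move=> dD; have [C splitC] := one_degenerate_cnbh_splitting (D :\: critical e D).
have cover K : (forall y, 1 < #|(D :\: critical e D) :&: cnbh e y| ->
                  (D :\: critical e D) :&: cnbh e y :&: K != set0) ->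
    gamma e <= #|critical e D| + #|(D :\: critical e D) :&: K|.
  move=> hitK; apply: leq_trans (gamma_min (dominating_critical_cover dD hitK)) _.
  by rewrite cardsU leq_subr.
have le1 : gamma e <= #|critical e D| + #|(D :\: critical e D) :&: C|.
  by apply: cover => y /splitC /andP[].
have le2 : gamma e <= #|critical e D| + #|(D :\: critical e D) :&: ~: C|.
  by apply: cover => y /splitC /andP[_]; rewrite setDE.
have := cardsID C (D :\: critical e D); rewrite [_ :\: C]setDE.
have := cardsD D (critical e D); rewrite (setIidPr (critical_sub e D)).
have := subset_leq_card (critical_sub e D).
lia.
Qed.

Lemma double_Gamma_ge D : dominating e D -> #|D| + #|critical e D| <= 2 * Gamma_ e.
Proof.
move=> dD; have [C bipC] := one_degenerate_bipartite.
have indC : independent e C.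
  by apply/independentP => u v uC vC; apply/negP => /bipC; rewrite uC vC.
have indCc : independent e (~: C).
  apply/independentP => u v; rewrite !inE => uC vC; apply/negP => /bipC.
  by rewrite (negbTE uC) (negbTE vC).
have cardIY K : #|isolated e D :|: undominated e (isolated e D) :&: K| =
                #|isolated e D| + #|undominated e (isolated e D) :&: K|.
  rewrite cardsU; suff -> : isolated e D :&: (undominated e (isolated e D) :&: K) = set0.
    by rewrite cards0 subn0.
  apply/setP => p; rewrite in_set0 !in_setI; apply/negbTE/negP => /and3P[pI pY _].
  move: pY; rewrite inE => /eqP Ip0.
  by have := in_set0 p; rewrite -Ip0 in_setI pI cnbh_refl.
have G1 := independent_le_Gamma sym irr (independent_isolated_undominated sym irr D indC).
have G2 :=
  independent_le_Gamma sym irr (independent_isolated_undominated sym irr D indCc).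
rewrite !cardIY in G1 G2.
have := card_critical_private sym dD.
have := cardsID C (undominated e (isolated e D)); rewrite setDE.
have := cardsD D (isolated e D); rewrite (setIidPr (isolated_sub e D)).
have := cardsD (critical e D) (isolated e D).
rewrite (setIidPr (isolated_sub_critical dD)).
have := subset_leq_card (isolated_sub e D).
have := subset_leq_card (isolated_sub_critical dD).
lia.
Qed.

End OneDegenerate.

Import GRing.Theory Num.Theory.
Local Open Scope ring_scope.

Lemma avd_bounds (T : finType) (e : rel T) (lo hi : nat) :
  (forall D, dominating e D -> (lo <= #|D| + #|critical e D| <= hi)%N) ->
  ((#|T| + lo)%:R / 3 <= avd e :> rat) /\ (avd e <= (#|T| + hi)%:R / 3 :> rat).
Proof.
move=> bounds; set S := (\sum_(D | dominating e D) #|D|)%N.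
have sum_ge : (n_dom e * (#|T| + lo) <= 3 * S)%N.
  rewrite three_sum_card_dominating mulnDr mulnC leq_add2l -sum_nat_cond_const.
  by apply: leq_sum => D /bounds /andP[].
have sum_le : (3 * S <= n_dom e * (#|T| + hi))%N.
  rewrite three_sum_card_dominating mulnDr mulnC leq_add2l -sum_nat_cond_const.
  by apply: leq_sum => D /bounds /andP[].
have N_gt0 : 0 < (n_dom e)%:R :> rat by rewrite ltr0n n_dom_gt0.
rewrite /avd -/S; split.
- rewrite ler_pdivlMr // mulrAC ler_pdivrMr // -!natrM ler_nat.
  by rewrite (mulnC S) (mulnC _ (n_dom e)).
- rewrite ler_pdivrMr // mulrAC ler_pdivlMr // -!natrM ler_nat.
  by rewrite (mulnC S) (mulnC _ (n_dom e)).
Qed.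

Unset Implicit Arguments.

Theorem theorem5p1 (T : finType) (e : rel T) :
  is_tree e ->
  ((#|T|%:R + 2 * (gamma e)%:R) / 3 <= avd e :> rat) /\
  (avd e <= (#|T|%:R + 2 * (Gamma_ e)%:R) / 3 :> rat).
Proof.
move=> tree; have [[sym irr] _ _ _] := tree.
have deg := tree_one_degenerate tree.
have bounds D : dominating e D ->
    (2 * gamma e <= #|D| + #|critical e D| <= 2 * Gamma_ e)%N.
  by move=> dD; rewrite (double_gamma_le sym deg dD) (double_Gamma_ge sym irr deg dD).
have [lo hi] := avd_bounds bounds.
by rewrite natrD natrM in lo; rewrite natrD natrM in hi.
Qed.
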